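(* Consider a convolutional linear network with lifting operator $\mathcal{A}$ and family of admissible supports $\mathfrak{M}$ as described in the context. Assume $|\mathcal{P}|=1$ and that for all $\mathcal{S},\mathcal{S}'\in\mathfrak{M}$ all the entries of $M_1(\mathbb{1}^{\mathcal{S}_1\cup\mathcal{S}'_1})\cdots M_K(\mathbb{1}^{\mathcal{S}_K\cup\mathcal{S}'_K})$ belong to $\{0,1\}$. Then for all $\mathcal{S},\mathcal{S}'\in\mathfrak{M}$, $\ker\mathcal{A}_{\mathcal{S}\cup\mathcal{S}'}$ is the orthogonal complement of $\mathbb{T}_{\mathcal{S}\cup\mathcal{S}'}$; $\mathcal{A}$ satisfies the Deep-$\mathfrak{M}$-Null Space Property with constants $(\gamma,\rho)=(1,+\infty)$; and the Deep-lower-RIP constant of $\mathcal{A}$ with regard to $\mathfrak{M}$ is $\sigma_{\mathfrak{M}}=\sqrt{N}$.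
   Context: Network: $\mathcal{G}$ is a rooted directed acyclic graph with root $r$ and set of leaves $\mathcal{L}$, edges directed towards the root; $\mathcal{P}$ is the set of all leaf-to-root paths. Every such path has exactly $K$ edges and each edge has a well-defined depth $k\in\{1,\dots,K\}$ (edges ending at the root have depth 1); $\mathcal{E}(k)$ is the set of edges of depth $k$. Signals live in $\mathbb{R}^N$, $*$ denotes convolution on $\mathbb{R}^N$. Each edge $e$ carries a kernel of maximal support $\mathcal{S}_e\subset\{1,\dots,N\}$, with $\sum_{e\in\mathcal{E}(k)}|\mathcal{S}_e|=S$ for every $k$. For each $k$, $\mathbb{N}_S=\{1,\dots,S\}$ is partitioned into blocks, one per $e\in\mathcal{E}(k)$, of size $|\mathcal{S}_e|$, and $\mathcal{T}_e:\mathbb{R}^S\to\mathbb{R}^N$ writes the entries of $h$ in the block of $e$ at the positions $\mathcal{S}_e$. For $\mathbf{h}=(\mathbf{h}_1,\dots,\mathbf{h}_K)\in\mathbb{R}^{S\times K}$, $M_k(\mathbf{h}_k)$ maps signals $(y_v)$ at origin nodes of edges in $\mathcal{E}(k)$ to $(\sum_{e\in\mathcal{E}(k),e:v\to u}\mathcal{T}_e(\mathbf{h}_k)*y_v)_u$ at end nodes; the network is $M_1(\mathbf{h}_1)\cdots M_K(\mathbf{h}_K)\in\mathbb{R}^{N\times N|\mathcal{L}|}$. For $\mathcal{C}\subset\mathbb{N}_S$, $\mathbb{1}^{\mathcal{C}}\in\mathbb{R}^S$ is its indicator vector. Tensors: $\mathbb{R}^{S^K}$ is the space of order-$K$ tensors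 indexed by $\mathbf{i}\in\mathbb{N}_S^K$, with Euclidean norm $\|\cdot\|$; Segre embedding $P(\mathbf{h})_{\mathbf{i}}=\mathbf{h}_{1,\mathbf{i}_1}\cdots\mathbf{h}_{K,\mathbf{i}_K}$; $\mathcal{A}$ is the unique linear map $\mathbb{R}^{S^K}\to\mathbb{R}^{N\times N|\mathcal{L}|}$ with $\mathcal{A}P(\mathbf{h})=M_1(\mathbf{h}_1)\cdots M_K(\mathbf{h}_K)$; matrices carry the Frobenius norm. A support is $\mathcal{S}=(\mathcal{S}_1,\dots,\mathcal{S}_K)$, $\mathcal{S}_k\subset\mathbb{N}_S$; unions are componentwise; $\mathbf{i}\in\mathcal{S}$ means $\mathbf{i}_k\in\mathcal{S}_k$ for all $k$. $\mathbb{R}^{S\times K}_{\mathcal{S}}=\{\mathbf{h}:\mathbf{h}_{k,i}=0\text{ whenever }i\notin\mathcal{S}_k\}$, $\mathbb{T}_{\mathcal{S}}=\{T:T_{\mathbf{i}}=0\text{ whenever }\mathbf{i}\notin\mathcal{S}\}$, $P_{\mathcal{S}}$ the orthogonal projection onto $\mathbb{T}_{\mathcal{S}}$, $\mathcal{A}_{\mathcal{S}}=\mathcal{A}P_{\mathcal{S}}$. $\mathfrak{M}$ is a given finite family of supports. Deep-$\mathfrak{M}$-Null Space Property with constants $(\gamma,\rho)$ ($\rho=+\infty$ allowed): for all $\mathcal{S},\mathcal{S}'\in\mathfrak{M}$, every $T\in P(\mathbb{R}^{S\times K}_{\mathcal{S}})+P(\mathbb{R}^{S\times K}_{\mathcal{S}'})$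 with $\|\mathcal{A}_{\mathcal{S}\cup\mathcal{S}'}T\|\le\rho$ and every $T'\in\ker\mathcal{A}_{\mathcal{S}\cup\mathcal{S}'}$ satisfy $\|T\|\le\gamma\|T-P_{\mathcal{S}\cup\mathcal{S}'}T'\|$. Deep-lower-RIP constant: $\sigma_{\mathfrak{M}}>0$ such that for all $\mathcal{S},\mathcal{S}'\in\mathfrak{M}$ and all $T$ orthogonal to $\ker\mathcal{A}_{\mathcal{S}\cup\mathcal{S}'}$, $\sigma_{\mathfrak{M}}\|P_{\mathcal{S}\cup\mathcal{S}'}T\|\le\|\mathcal{A}_{\mathcal{S}\cup\mathcal{S}'}T\|$. *)

(* Convolutional linear network with a single leaf-to-root path
   (|P| = 1), i.e. a chain of K edges. *)
From HB Require Import structures.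
From mathcomp Require Import all_boot all_order all_algebra.
Set Implicit Arguments. Unset Strict Implicit. Unset Printing Implicit Defensive.
Import Order.TTheory GRing.Theory Num.Theory.
Local Open Scope ring_scope.

Definition tindex (K S : nat) := {ffun 'I_K -> 'I_S}.
Notation tensor R K S := {ffun tindex K S -> R^o}.

Section Net.
Variables (R : rcfType) (K S N : nat).
Local Notation tindex := (tindex K S).
Local Notation tensor := (tensor R K S).

Definition subord (i j : 'I_N) : 'I_N :=
  Ordinal (ltn_pmod (i + N - j) (leq_ltn_trans (leq0n i) (ltn_ord i))).

(** matrix of y |-> x * y (circular convolution on R^N):  (x*y)_i = sum_j x_(i-j) y_j *)
Definition convmx (x : 'I_N -> R) : 'M[R]_N := \matrix_(i, j) x (subord i j).

(** kernel writing operator T_e for the (unique) edge of depth k+1: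
    the entries of v are written, in order, at the positions of Se k
    (listed increasingly); zero elsewhere *)
Definition getn (v : 'I_S -> R) (n : nat) : R := \sum_(j : 'I_S | val j == n) v j.
Definition Tker (Se : 'I_K -> {set 'I_N}) (k : 'I_K) (v : 'I_S -> R) : 'I_N -> R :=
  fun p => if p \in Se k then getn v (index p (enum (Se k))) else 0.

(** network M_1(h_1) ... M_K(h_K); h_k = column k of h (depth k+1 ~ index k) *)
Definition net (Se : 'I_K -> {set 'I_N}) (h : 'M[R]_(S, K)) : 'M[R]_N :=
  foldr (fun k acc => convmx (Tker Se k (fun i => h i k)) *m acc) 1%:M (enum 'I_K).

Definition segre (h : 'M[R]_(S, K)) : tensor := [ffun i : tindex => \prod_(k < K) h (i k) k].

Definition supp := {ffun 'I_K -> {set 'I_S}}.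
Definition suppU (Sp Sp' : supp) : supp := [ffun k => Sp k :|: Sp' k].
Definition insupp (Sp : supp) (i : tindex) : bool := [forall k, i k \in Sp k].

Definition indic (Sp : supp) : 'M[R]_(S, K) := \matrix_(i, k) (i \in Sp k)%:R.

Definition RS (Sp : supp) (h : 'M[R]_(S, K)) : Prop := forall i k, i \notin Sp k -> h i k = 0.
Definition TS (Sp : supp) (T : tensor) : Prop := forall i, ~~ insupp Sp i -> T i = 0.
Definition projS (Sp : supp) (T : tensor) : tensor :=
  [ffun i => if insupp Sp i then T i else 0].
Definition AS (A : tensor -> 'M[R]_N) (Sp : supp) (T : tensor) : 'M[R]_N := A (projS Sp T).
Definition kerAS (A : tensor -> 'M[R]_N) (Sp : supp) (T : tensor) : Prop := AS A Sp T = 0.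

Definition tdot (T U : tensor) : R := \sum_i T i * U i.
Definition tnorm (T : tensor) : R := Num.sqrt (tdot T T).
Definition mxnorm (M : 'M[R]_N) : R := Num.sqrt (\sum_i \sum_j M i j ^+ 2).
Definition orthC (P : tensor -> Prop) (T : tensor) : Prop := forall U, P U -> tdot T U = 0.

Definition segre_sum (Sp Sp' : supp) (T : tensor) : Prop :=
  exists h h', [/\ RS Sp h, RS Sp' h' & T = segre h + segre h'].

(** Deep-M-NSP with constants (gamma, rho); rho = None stands for +infinity *)
Definition deep_NSP (A : tensor -> 'M[R]_N) (M : {set supp}) (gamma : R) (rho : option R) : Prop :=
  forall Sp Sp', Sp \in M -> Sp' \in M ->
  forall T, segre_sum Sp Sp' T ->
    (match rho with Some r => mxnorm (AS A (suppU Sp Sp') T) <= r | None => True end : Prop) ->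
  forall T', kerAS A (suppU Sp Sp') T' ->
    tnorm T <= gamma * tnorm (T - projS (suppU Sp Sp') T').

Definition deep_lower_RIP (A : tensor -> 'M[R]_N) (M : {set supp}) (sigma : R) : Prop :=
  0 < sigma /\
  forall Sp Sp', Sp \in M -> Sp' \in M ->
  forall T, orthC (kerAS A (suppU Sp Sp')) T ->
    sigma * tnorm (projS (suppU Sp Sp') T) <= mxnorm (AS A (suppU Sp Sp') T).

End Net.

(* An index i of N_S^K selects one kernel entry per edge; the Segre image of the matrix whose
   k-th column is the standard vector e_(i_k) is the basis tensor e_i.  On it the network is a
   product of convolutions by Diracs, i.e. the permutation matrix of a circular shift of R^N
   determined by i.  Hence column j of A T is the push-forward of T along i |-> path_shift i j,
   and M_1(1^U_1)...M_K(1^U_K) = A(1_U) counts at (r, j) the indices of U shifted from j to r: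
   its entries lie in {0, 1} exactly when these shifts are injective on U.  Then every column of
   A P, for P supported on U, is a rearrangement of the entries of P, so ||A P||^2 = N ||P||^2.
   This isometry (up to sqrt N) on T_U yields the kernel (P_U T = 0, i.e. T orthogonal to T_U),
   the null space property with gamma = 1 (P_U T' = 0 on the kernel) and sigma = sqrt N. *)

From mathcomp Require Import all_boot all_order all_algebra.
From mathcomp Require Import lra.
Set Implicit Arguments. Unset Strict Implicit. Unset Printing Implicit Defensive.
Import Order.TTheory GRing.Theory Num.Theory.
Local Open Scope ring_scope.

Section FunMatrix.
Variable R : pzSemiRingType.

Definition fun_mx m n (f : 'I_n -> 'I_m) : 'M[R]_(m, n) := \matrix_(r, j) (r == f j)%:R.

Lemma fun_mx_id n : fun_mx (@id 'I_n) = 1%:M.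
Proof. by apply/matrixP => r j; rewrite !mxE. Qed.

Lemma fun_mxM m n p (f : 'I_n -> 'I_m) (g : 'I_p -> 'I_n) :
  fun_mx f *m fun_mx g = fun_mx (f \o g).
Proof.
apply/matrixP => r j; rewrite !mxE (bigD1 (g j)) //= big1 => [|l /negbTE nl].
  by rewrite !mxE eqxx mulr1 addr0.
by rewrite !mxE nl mulr0.
Qed.

End FunMatrix.

Lemma prodr_natb (R : comPzSemiRingType) (I : finType) (b : I -> bool) :
  \prod_i ((b i)%:R : R) = [forall i, b i]%:R.
Proof.
have [/forallP bT|/forallPn [i /negbTE bi]] := boolP [forall i, b i].
  by rewrite big1 // => i _; rewrite bT.
by rewrite (bigD1 i) //= bi mul0r.
Qed.

Lemma sum_sqr_pushforward (R : comPzSemiRingType) (I J : finType) (a : I -> R) (f : I -> J) :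
  {in [pred i | a i != 0] &, injective f} ->
  \sum_r (\sum_i a i * (r == f i)%:R) ^+ 2 = \sum_i a i ^+ 2.
Proof.
move=> f_inj; under eq_bigr do rewrite expr2 big_distrlr /=.
rewrite exchange_big; apply: eq_bigr => i _ /=.
have cross i' : i' != i -> \sum_r a i * (r == f i)%:R * (a i' * (r == f i')%:R) = 0.
  move=> i'i; apply: big1 => r _.
  have [->|ai] := eqVneq (a i) 0; first by rewrite !mul0r.
  have [->|ai'] := eqVneq (a i') 0; first by rewrite mul0r mulr0.
  case: (r =P f i) => [->|_]; last by rewrite mulr0 mul0r.
  case: (f i =P f i') => [/f_inj fii'|_]; last by rewrite !mulr0.
  by rewrite fii' ?eqxx in i'i.
rewrite exchange_big (bigD1 i) //= [X in _ + X]big1 ?addr0; last exact: cross.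
rewrite (bigD1 (f i)) //= big1 => [|r /negbTE rf]; last by rewrite rf mulr0 mul0r.
by rewrite eqxx mulr1 addr0 expr2.
Qed.

Lemma pushforward_01_injective (R : realDomainType) (I J : finType) (U : pred I) (f : I -> J) :
  (forall r, \sum_i (U i)%:R * (r == f i)%:R \in [:: 0; 1 : R]) -> {in U &, injective f}.
Proof.
move=> f01 i i'; rewrite !unfold_in => Ui Ui' fii'; apply/eqP; apply: contraT => ii'.
have := f01 (f i); rewrite (bigD1 i) //= (bigD1 i') /=; last by rewrite eq_sym ii'.
rewrite Ui Ui' fii' eqxx /= !mulr1n !mulr1.
set rest := \sum_(_ | _) _.
have : 0 <= rest by apply: sumr_ge0 => x _; rewrite mulr_ge0 ?ler0n.
by rewrite !inE => ? /orP[] /eqP; lra.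
Qed.

Section Tensors.
Variables (R : rcfType) (K S : nat).
Implicit Types (T P : tensor R K S) (U : supp K S) (i : tindex K S).

Definition tbasis i : tensor R K S := [ffun x => (x == i)%:R].

Lemma tensor_sum_tbasis T : T = \sum_i T i *: tbasis i.
Proof.
apply/ffunP => x; rewrite sum_ffunE (bigD1 x) //= big1 => [|i /negbTE xi].
  by rewrite ffunE /= ffunE eqxx mulr1n [_ *: _]mulr1 addr0.
by rewrite ffunE /= ffunE eq_sym xi mulr0n [_ *: _]mulr0.
Qed.

Lemma tdot_tbasis T i : tdot T (tbasis i) = T i.
Proof.
rewrite /tdot (bigD1 i) //= big1 => [|x /negbTE xi]; first by rewrite ffunE eqxx mulr1 addr0.
by rewrite ffunE xi mulr0.
Qed.

Lemma segre_indic U : segre (indic R U) = [ffun i => (insupp U i)%:R].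
Proof. by apply/ffunP => x; rewrite !ffunE; under eq_bigr do rewrite mxE; rewrite prodr_natb. Qed.

Lemma projS_TS U T : TS U (projS U T).
Proof. by move=> i /negbTE Ui; rewrite ffunE Ui. Qed.

Lemma projS_eq0 U T : projS U T = 0 <-> forall i, insupp U i -> T i = 0.
Proof.
split=> [UT0 i Ui | T0]; first by have := congr1 (fun P => P i) UT0; rewrite !ffunE Ui.
by apply/ffunP => i; rewrite !ffunE; case: ifP => // /T0.
Qed.

Lemma orthC_TS U T : orthC (TS U) T <-> projS U T = 0.
Proof.
rewrite projS_eq0; split=> [TU i Ui | T0 P PU].
  rewrite -tdot_tbasis; apply: TU => x; rewrite ffunE.
  by case: eqP => // ->; rewrite Ui.
by rewrite /tdot big1 // => i _; case: (boolP (insupp U i)) => [/T0 -> | /PU ->];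
  rewrite ?mul0r ?mulr0.
Qed.

Lemma sum_sqr_eq0 T : \sum_i T i ^+ 2 = 0 -> T = 0.
Proof.
move/eqP; rewrite psumr_eq0 => [/allP T0|i _]; last exact: sqr_ge0.
by apply/ffunP => i; rewrite ffunE; apply/eqP; rewrite -sqrf_eq0; apply: (implyP (T0 i _)).
Qed.

End Tensors.

Section CircularShift.
Variable N : nat.

Definition addord (p j : 'I_N) : 'I_N :=
  Ordinal (ltn_pmod (p + j) (leq_ltn_trans (leq0n p) (ltn_ord p))).

Lemma subord_eqE (r j p : 'I_N) : (subord r j == p) = (r == addord p j).
Proof.
rewrite -!val_eqE /= -(modn_small (ltn_ord p)) -(eqn_modDr j) subnK.
  by rewrite modnDr (modn_small (ltn_ord r)) modnDml.
by rewrite (leq_trans (ltnW (ltn_ord j))) ?leq_addl.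
Qed.

Lemma convmx_dirac (R : rcfType) (v : 'I_N -> R) p :
  v =1 (fun x => (x == p)%:R) -> convmx v = fun_mx R (addord p).
Proof. by move=> vp; apply/matrixP => r j; rewrite !mxE vp subord_eqE. Qed.

End CircularShift.

Section Network.
Variables (R : rcfType) (K S N : nat) (Se : 'I_K -> {set 'I_N}).
Hypothesis card_Se : forall k, #|Se k| = S.
Implicit Types (i : tindex K S) (k : 'I_K).

Definition dirac_mx i : 'M[R]_(S, K) := \matrix_(j, k) (j == i k)%:R.

Lemma segre_dirac_mx i : segre (dirac_mx i) = tbasis R i.
Proof.
apply/ffunP => x; rewrite !ffunE; under eq_bigr do rewrite mxE.
rewrite prodr_natb; congr (nat_of_bool _)%:R.
by apply/forallP/eqP => [xi | -> //]; apply/ffunP => k; apply/eqP/xi.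
Qed.

Definition kernel_pos k i : 'I_N := enum_val (cast_ord (esym (card_Se k)) (i k)).

Lemma Tker_dirac_mx k i :
  Tker Se k (fun j => dirac_mx i j k) =1 (fun x => (x == kernel_pos k i)%:R).
Proof.
have pos_in : kernel_pos k i \in Se k by exact: enum_valP.
move=> x; rewrite /Tker /getn; case: ifPn => [x_in | /negbTE x_out]; last first.
  by case: eqP x_out => // ->; rewrite pos_in.
rewrite big_mkcond (bigD1 (i k)) //= big1 => [|j /negbTE ji]; last by rewrite mxE ji; case: ifP.
rewrite mxE eqxx addr0 /kernel_pos (enum_val_nth x) /=.
have ik_lt : (i k < size (enum (Se k)))%N by rewrite -cardE card_Se.
have -> : (x == nth x (enum (Se k)) (i k)) = (i k == index x (enum (Se k)) :> nat).
  apply/eqP/eqP => [-> | ->]; first by rewrite index_uniq ?enum_uniq.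
  by rewrite nth_index ?mem_enum.
by case: ifP.
Qed.

Definition path_shift i : 'I_N -> 'I_N :=
  foldr (fun k f => addord (kernel_pos k i) \o f) id (enum 'I_K).

Lemma net_dirac_mx i : net Se (dirac_mx i) = fun_mx R (path_shift i).
Proof.
rewrite /net /path_shift; elim: (enum 'I_K) => [|k s IHs] /=; first by rewrite fun_mx_id.
by rewrite IHs (convmx_dirac (Tker_dirac_mx k i)) fun_mxM.
Qed.

Variable A : {linear tensor R K S -> 'M[R]_N}.
Hypothesis A_segre : forall h : 'M[R]_(S, K), A (segre h) = net Se h.

Lemma lifting_entry T r j : A T r j = \sum_i T i * (r == path_shift i j)%:R.
Proof.
rewrite {1}(tensor_sum_tbasis T) linear_sum summxE; apply: eq_bigr => i _.
by rewrite linearZ -segre_dirac_mx A_segre net_dirac_mx !mxE.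
Qed.

Lemma path_shift_injective (U : supp K S) :
  (forall r j, net Se (indic R U) r j \in [:: 0; 1]) ->
  forall j, {in insupp U &, injective (path_shift^~ j)}.
Proof.
move=> net01 j; apply: (pushforward_01_injective (R := R)) => r.
by have := net01 r j; rewrite -A_segre lifting_entry segre_indic; under eq_bigr do rewrite ffunE.
Qed.

Section InjectiveSupport.
Variable U : supp K S.
Hypotheses (N_gt0 : (0 < N)%N) (shift_inj : forall j, {in insupp U &, injective (path_shift^~ j)}).

Lemma col_sum_sqr_lifting P j : TS U P -> \sum_r A P r j ^+ 2 = \sum_i P i ^+ 2.
Proof.
move=> PU; under eq_bigr do rewrite lifting_entry.
have P_supp i : P i != 0 -> insupp U i by apply: contraR => /PU ->; rewrite eqxx.
by apply: sum_sqr_pushforward => i i'; rewrite !inE => /P_supp Ui /P_supp Ui'; apply: shift_inj.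
Qed.

Lemma mxnorm_lifting P : TS U P -> mxnorm (A P) = Num.sqrt N%:R * tnorm P.
Proof.
move=> PU; rewrite /mxnorm /tnorm -sqrtrM ?ler0n // exchange_big /=.
under eq_bigr do rewrite col_sum_sqr_lifting //.
by rewrite sumr_const card_ord mulr_natl /tdot; under [in RHS]eq_bigr do rewrite -expr2.
Qed.

Lemma lifting_TS_eq0 P : TS U P -> A P = 0 -> P = 0.
Proof.
move=> PU AP0; apply: sum_sqr_eq0.
by rewrite -(col_sum_sqr_lifting (Ordinal N_gt0) PU) AP0 big1 // => r _; rewrite mxE expr0n.
Qed.

Lemma kerAS_projS T : kerAS A U T <-> projS U T = 0.
Proof.
rewrite /kerAS /AS; split=> [|->]; last exact: linear0.
exact: lifting_TS_eq0 (projS_TS T).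
Qed.

End InjectiveSupport.
End Network.

Theorem proposition3 (R : rcfType) (K S N : nat) (Se : 'I_K -> {set 'I_N})
    (M : {set supp K S}) (A : {linear tensor R K S -> 'M[R]_N}) :
  (0 < N)%N ->
  (forall k, #|Se k| = S) ->
  (forall h : 'M[R]_(S, K), A (segre h) = net Se h) ->
  (forall Sp Sp', Sp \in M -> Sp' \in M ->
     forall i j, net Se (indic R (suppU Sp Sp')) i j \in [:: 0; 1]) ->
  [/\ (forall Sp Sp', Sp \in M -> Sp' \in M ->
         forall T, kerAS A (suppU Sp Sp') T <-> orthC (TS (suppU Sp Sp')) T),
      deep_NSP A M 1 None
    & deep_lower_RIP A M (Num.sqrt N%:R)].
Proof.
move=> N_gt0 card_Se A_segre net01.
have shift_inj Sp Sp' (MSp : Sp \in M) (MSp' : Sp' \in M) :=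
  path_shift_injective (card_Se := card_Se) A_segre (net01 _ _ MSp MSp').
have kerAS_iff Sp Sp' (MSp : Sp \in M) (MSp' : Sp' \in M) :=
  kerAS_projS A_segre N_gt0 (shift_inj _ _ MSp MSp').
split.
- by move=> Sp Sp' MSp MSp' T; rewrite kerAS_iff // orthC_TS.
- move=> Sp Sp' MSp MSp' T _ _ T' /kerAS_iff -> //.
  by rewrite subr0 mul1r.
split=> [|Sp Sp' MSp MSp' T _]; first by rewrite sqrtr_gt0 ltr0n.
by rewrite /AS (mxnorm_lifting A_segre (shift_inj _ _ MSp MSp') (projS_TS T)).
Qed.
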